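(* Let $k\ge1$ be an integer and $\rho\in(0,1)$. The function $\tilde\rho$ is convex on $[1,+\infty)$. Consequently, for every $C\in[1,C_*]$, $$\tilde\rho(C)\le\frac{C_*-C}{C_*-1}\rho^k+\frac{C-1}{C_*-1}\rho_*.$$
   Context: $\mathbb{R}_k[X]$ denotes real polynomials of degree at most $k$, and $\|p\|_1$ is the sum of absolute values of the coefficients of $p$. For $C\ge1$, $\tilde\rho(C)=\min\{\max_{x\in[0,\rho]}|p(x)| : p\in\mathbb{R}_k[X],\ p(1)=1,\ \|p\|_1\le C\}$. Let $T_k$ be the Chebyshev polynomial of the first kind of degree $k$, $p_*(X)=T_k(\tfrac{2X-\rho}{\rho})/|T_k(\tfrac{2-\rho}{\rho})|$ (the minimizer of $\max_{[0,\rho]}|p|$ over $p\in\mathbb{R}_k[X]$ with $p(1)=1$), $C_*=\|p_*\|_1$, and $\rho_*=\frac{2\beta^k}{1+\beta^{2k}}$ with $\beta=\frac{1-\sqrt{1-\rho}}{1+\sqrt{1-\rho}}$ (the optimal value of that unconstrained problem). *)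

From HB Require Import structures.
From mathcomp Require Import all_boot all_order all_algebra.
From mathcomp Require Import boolp classical_sets reals.
Set Implicit Arguments. Unset Strict Implicit. Unset Printing Implicit Defensive.
Import Order.TTheory GRing.Theory Num.Theory.
Local Open Scope ring_scope.
Local Open Scope classical_set_scope.

Section Defs.
Variable R : realType.

Definition norm1 (p : {poly R}) : R := \sum_(i < size p) `|p`_i|.

Definition supnorm (rho : R) (p : {poly R}) : R :=
  sup [set `|p.[x]| | x in [set x : R | 0 <= x <= rho]].

Definition admissible (k : nat) (C : R) (p : {poly R}) : Prop :=
  (size p <= k.+1)%N /\ p.[1] = 1 /\ norm1 p <= C.

(* tilde rho(C) = min over admissible p of max_{[0,rho]} |p| (the minimum is
   attained, so it equals the infimum of the set of values) *)
Definition rho_tilde (k : nat) (rho C : R) : R :=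
  inf [set supnorm rho p | p in admissible k C].

Fixpoint cheb_pair (n : nat) : {poly R} * {poly R} :=
  match n with
  | O => (1, 'X)
  | S m => let: (a, b) := cheb_pair m in (b, 2%:P * 'X * b - a)
  end.
Definition cheb (n : nat) : {poly R} := (cheb_pair n).1.

Definition p_star (k : nat) (rho : R) : {poly R} :=
  `|(cheb k).[(2 - rho) / rho]|^-1 *:
    (cheb k \Po ((2 / rho) *: 'X - 1%:P)).

Definition C_star (k : nat) (rho : R) : R := norm1 (p_star k rho).

Definition beta (rho : R) : R :=
  (1 - Num.sqrt (1 - rho)) / (1 + Num.sqrt (1 - rho)).

Definition rho_star (k : nat) (rho : R) : R :=
  2 * beta rho ^+ k / (1 + beta rho ^+ (2 * k)).

End Defs.

From HB Require Import structures.
From mathcomp Require Import all_boot all_order all_algebra.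
From mathcomp Require Import boolp classical_sets reals.
From mathcomp Require Import lra ring zify.
Import Order.TTheory GRing.Theory Num.Theory.
Local Open Scope ring_scope.

(* Convex combinations of admissible polynomials are admissible for the
   combined budget, since ||.||_1 and the sup norm on [0, rho] are seminorms;
   passing to near-optimal polynomials makes rho~ convex.  The chord bound
   then interpolates between C = 1, where X^k is admissible with sup norm
   rho^k, and C = C_*, where p_* is admissible with sup norm rho_*: indeed
   |T_k| <= 1 on [-1, 1] and T_k((2 - rho)/rho) = (beta^k + beta^-k)/2 =
   1/rho_*.  Finally C_* > 1, so the chord is not degenerate: if
   ||p_*||_1 = p_*(1) = 1, all coefficients of p_* would be nonnegative,
   hence p_*(0) = |p_*(0)| = rho_* and
   p_*(rho) - p_*(0) >= rho^k (1 - p_*(0)) > 0, whereas p_*(rho) = rho_*. *)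

Lemma convex_le_chord (R : realFieldType) (f : R -> R) (a b A B x : R) :
  (forall t, 0 <= t <= 1 -> f (t * a + (1 - t) * b) <= t * f a + (1 - t) * f b) ->
  a < b -> f a <= A -> f b <= B -> a <= x <= b ->
  f x <= (b - x) / (b - a) * A + (x - a) / (b - a) * B.
Proof.
move=> f_convex lt_ab fa_le fb_le /andP[le_ax le_xb].
have ba_gt0 : 0 < b - a by rewrite subr_gt0.
have t_ge0 : 0 <= (b - x) / (b - a) by rewrite divr_ge0 ?subr_ge0 // ltW.
have s_ge0 : 0 <= (x - a) / (b - a) by rewrite divr_ge0 ?subr_ge0 // ltW.
have s_def : 1 - (b - x) / (b - a) = (x - a) / (b - a) by field; exact: lt0r_neq0.
have x_def : x = (b - x) / (b - a) * a + (x - a) / (b - a) * b.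
  by field; exact: lt0r_neq0.
rewrite {1}x_def -s_def; apply: le_trans (f_convex _ _) _.
  by rewrite t_ge0 -subr_ge0 s_def.
by rewrite s_def lerD // ler_wpM2l.
Qed.

Section Norm1.
Context {R : realType}.
Implicit Types (p q : {poly R}) (a x : R).

Lemma norm1_widen {p n} : (size p <= n)%N -> norm1 p = \sum_(i < n) `|p`_i|.
Proof.
move=> le_pn; rewrite /norm1 (big_ord_widen n (fun i => `|p`_i|)) // big_mkcond /=.
apply: eq_bigr => i _; case: ltnP => // le_p_i.
by rewrite nth_default ?normr0.
Qed.

Lemma norm1D p q : norm1 (p + q) <= norm1 p + norm1 q.
Proof.
have le_p := leq_maxl (size p) (size q); have le_q := leq_maxr (size p) (size q).
rewrite (norm1_widen (size_polyD p q)) (norm1_widen le_p) (norm1_widen le_q).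
rewrite -big_split /=.
by apply: ler_sum => i _; rewrite coefD ler_normD.
Qed.

Lemma norm1Z a p : norm1 (a *: p) = `|a| * norm1 p.
Proof.
rewrite (norm1_widen (size_scale_leq a p)) /norm1 mulr_sumr.
by apply: eq_bigr => i _; rewrite coefZ normrM.
Qed.

Lemma norm1_horner_le p x : `|x| <= 1 -> `|p.[x]| <= norm1 p.
Proof.
move=> x_le1; rewrite horner_coef /norm1.
apply: le_trans (ler_norm_sum _ _ _) _; apply: ler_sum => i _.
by rewrite normrM normrX ler_piMr // exprn_ile1.
Qed.

Lemma coef_ge0_norm1_eq p : norm1 p = p.[1] -> forall i, 0 <= p`_i.
Proof.
rewrite /norm1 horner_coef => eq_norm1 i.
have [lt_i_p | le_p_i] := ltnP i (size p); last by rewrite nth_default.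
have gap_ge0 (j : 'I_(size p)) : true -> 0 <= `|p`_j| - p`_j * 1 ^+ j.
  by move=> _; rewrite expr1n mulr1 subr_ge0 ler_norm.
have := psumr_eq0P gap_ge0; rewrite sumrB eq_norm1 subrr.
move=> /(_ erefl (Ordinal lt_i_p) isT) /= /eqP.
rewrite expr1n mulr1 subr_eq0 => /eqP <-.
exact: normr_ge0.
Qed.

Lemma ler_horner_sub0 k p x : (forall i, 0 <= p`_i) -> (size p <= k.+1)%N ->
  0 <= x <= 1 -> x ^+ k * (p.[1] - p.[0]) <= p.[x] - p.[0].
Proof.
move=> p_ge0 size_p /andP[x_ge0 x_le1].
rewrite !horner_coef -!sumrB mulr_sumr; apply: ler_sum => -[[|i] lt_i_p] _ /=.
  by rewrite !expr0 !subrr mulr0.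
rewrite expr1n !expr0n /= !mulr0 !subr0 mulr1 mulrC ler_wpM2l //.
by apply: ler_wiXn2l => //; rewrite -ltnS (leq_trans lt_i_p).
Qed.

End Norm1.

Section SupNorm.
Context {R : realType} {rho : R}.
Hypothesis rho_ge0 : 0 <= rho.
Implicit Types (p q : {poly R}) (a x M : R).

Lemma supnorm_le p M : (forall x, 0 <= x <= rho -> `|p.[x]| <= M) ->
  supnorm rho p <= M.
Proof.
move=> bound_p; apply: ge_sup; first by exists `|p.[0]|, 0; rewrite //= lexx.
by move=> _ [x x_in <-]; apply: bound_p.
Qed.

Hypothesis rho_le1 : rho <= 1.

Lemma supnorm_ub p x : 0 <= x <= rho -> `|p.[x]| <= supnorm rho p.
Proof.
move=> x_in; apply: ub_le_sup; last by exists x.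
exists (norm1 p) => _ [y /andP[y_ge0 y_le] <-]; apply: norm1_horner_le.
by rewrite ger0_norm // (le_trans y_le).
Qed.

Lemma supnorm_ge0 p : 0 <= supnorm rho p.
Proof.
by apply: le_trans (normr_ge0 p.[0]) (supnorm_ub p 0 _); rewrite lexx rho_ge0.
Qed.

Lemma supnormD p q : supnorm rho (p + q) <= supnorm rho p + supnorm rho q.
Proof.
apply: supnorm_le => x x_in; rewrite hornerD (le_trans (ler_normD _ _)) //.
by rewrite lerD ?supnorm_ub.
Qed.

Lemma supnormZ a p : supnorm rho (a *: p) <= `|a| * supnorm rho p.
Proof.
by apply: supnorm_le => x x_in; rewrite hornerZ normrM ler_wpM2l ?supnorm_ub.
Qed.

End SupNorm.

Section RhoTilde.
Context {R : realType}.
Variable k : nat.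
Implicit Types (p : {poly R}) (rho t C : R).

Lemma admissible1 C : 1 <= C -> admissible k C 1.
Proof.
move=> C_ge1; split; first by rewrite size_polyC; case: (_ != _).
by rewrite hornerC /norm1 size_polyC oner_neq0 big_ord1 coefC normr1.
Qed.

Lemma admissible_convex t C1 C2 p1 p2 : 0 <= t <= 1 ->
  admissible k C1 p1 -> admissible k C2 p2 ->
  admissible k (t * C1 + (1 - t) * C2) (t *: p1 + (1 - t) *: p2).
Proof.
move=> /andP[t_ge0 t_le1] [size_p1 [p1_1 norm_p1]] [size_p2 [p2_1 norm_p2]].
have s_ge0 : 0 <= 1 - t by rewrite subr_ge0.
split; last split.
- rewrite (leq_trans (size_polyD _ _)) // geq_max.
  by rewrite !(leq_trans (size_scale_leq _ _)).
- by rewrite hornerD !hornerZ p1_1 p2_1 !mulr1 subrKC.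
- apply: le_trans (norm1D _ _) _; rewrite !norm1Z !ger0_norm //.
  by rewrite lerD // ler_wpM2l.
Qed.

Context {rho : R}.
Hypotheses (rho_ge0 : 0 <= rho) (rho_le1 : rho <= 1).

Lemma rho_tilde_le C p : admissible k C p -> rho_tilde k rho C <= supnorm rho p.
Proof.
move=> adm_p; apply: ge_inf; last by exists p.
by exists 0 => _ [q _ <-]; apply: supnorm_ge0.
Qed.

Lemma rho_tilde_approx C e : 1 <= C -> 0 < e ->
  exists2 p, admissible k C p & supnorm rho p < rho_tilde k rho C + e.
Proof.
move=> C_ge1 e_gt0.
have values_has_inf : has_inf [set supnorm rho p | p in admissible k C]%classic.
  split; first by exists (supnorm rho 1), 1; first exact: admissible1.
  by exists 0 => _ [q _ <-]; apply: supnorm_ge0.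
by have [_ [p adm_p <-]] := inf_adherent e_gt0 values_has_inf; exists p.
Qed.

Lemma rho_tilde_convex C1 C2 t : 1 <= C1 -> 1 <= C2 -> 0 <= t <= 1 ->
  rho_tilde k rho (t * C1 + (1 - t) * C2)
    <= t * rho_tilde k rho C1 + (1 - t) * rho_tilde k rho C2.
Proof.
move=> C1_ge1 C2_ge1 t01; have /andP[t_ge0 t_le1] := t01.
have s_ge0 : 0 <= 1 - t by rewrite subr_ge0.
apply/ler_addgt0Pr => e e_gt0.
have [p1 adm_p1 /ltW near_p1] := rho_tilde_approx C1 e C1_ge1 e_gt0.
have [p2 adm_p2 /ltW near_p2] := rho_tilde_approx C2 e C2_ge1 e_gt0.
apply: le_trans (rho_tilde_le _ _ (admissible_convex _ _ _ _ _ t01 adm_p1 adm_p2)) _.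
apply: le_trans (supnormD rho_ge0 rho_le1 _ _) _.
apply: le_trans (lerD (supnormZ rho_ge0 rho_le1 _ _)
                      (supnormZ rho_ge0 rho_le1 _ _)) _.
have := ler_wpM2l t_ge0 near_p1; have := ler_wpM2l s_ge0 near_p2.
rewrite !ger0_norm //; lra.
Qed.

Lemma rho_tilde1 : rho_tilde k rho 1 <= rho ^+ k.
Proof.
have adm_Xk : admissible k (1 : R) 'X^k.
  split; first by rewrite size_polyXn.
  split; first by rewrite hornerXn expr1n.
  rewrite /norm1 size_polyXn big_ord_recr /= coefXn eqxx normr1 big1 ?add0r //.
  by move=> i _; rewrite coefXn ltn_eqF ?normr0.
apply: le_trans (rho_tilde_le _ _ adm_Xk) _.
apply: supnorm_le => // x /andP[x_ge0 x_le].
by rewrite hornerXn normrX ger0_norm // lerXn2r.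
Qed.

End RhoTilde.

Section Chebyshev.
Context {R : realType}.
Implicit Types (n : nat) (x z : R).

Lemma chebSS n : cheb R n.+2 = 2%:P * 'X * cheb R n.+1 - cheb R n.
Proof. by rewrite /cheb /=; case: cheb_pair. Qed.

Lemma cheb_hornerSS n x :
  (cheb R n.+2).[x] = 2 * x * (cheb R n.+1).[x] - (cheb R n).[x].
Proof. by rewrite chebSS hornerD hornerN !hornerM hornerC hornerX. Qed.

Lemma size_cheb n : (size (cheb R n) <= n.+1)%N.
Proof.
suff [] : (size (cheb R n) <= n.+1)%N /\ (size (cheb R n.+1) <= n.+2)%N by [].
elim: n => [|n [size_n size_n1]].
  by rewrite size_polyX size_polyC; case: (_ != _).
split=> //; rewrite chebSS (leq_trans (size_polyD _ _)) // geq_max size_polyN.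
rewrite (leq_trans size_n (leqW (leqnSn _))) andbT.
rewrite -mulrA mul_polyC (leq_trans (size_scale_leq _ _)) //.
by rewrite (leq_trans (size_polyMleq _ _)) // size_polyX.
Qed.

Lemma cheb_horner_pell n x :
  (cheb R n).[x] ^+ 2 - 2 * x * (cheb R n).[x] * (cheb R n.+1).[x]
    + (cheb R n.+1).[x] ^+ 2 = 1 - x ^+ 2.
Proof.
elim: n => [|n IHn]; first by rewrite /cheb /= hornerC hornerX; ring.
by rewrite cheb_hornerSS -IHn; ring.
Qed.

Lemma cheb_horner_sqr1 n x : x ^+ 2 = 1 -> (cheb R n).[x] = x ^+ n.
Proof.
move=> x2; suff [] : (cheb R n).[x] = x ^+ n /\ (cheb R n.+1).[x] = x ^+ n.+1 by [].
elim: n => [|n [IHn IHn1]]; first by rewrite /cheb /= hornerC hornerX.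
have xSS m : x ^+ m.+2 = x ^+ m by rewrite -addn2 exprD x2 mulr1.
by split=> //; rewrite cheb_hornerSS IHn IHn1 -mulrA -exprS !xSS; ring.
Qed.

Lemma cheb_horner_le1 n x : `|x| <= 1 -> `|(cheb R n).[x]| <= 1.
Proof.
move=> x_le1; have x2_le1 : x ^+ 2 <= 1 by rewrite -real_normK ?num_real ?exprn_ile1.
suff : (cheb R n).[x] ^+ 2 <= 1 by rewrite -real_normK ?num_real // expr_le1.
have [x2_lt1 | x2_ge1] := ltP (x ^+ 2) 1; last first.
  have x2 : x ^+ 2 = 1 by apply/eqP; rewrite eq_le x2_le1 x2_ge1.
  by rewrite cheb_horner_sqr1 // -exprM mulnC exprM x2 expr1n.
have := cheb_horner_pell n x; set a := (cheb R n).[x]; set b := (cheb R n.+1).[x].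
move=> pell_ab; have pell : (b - x * a) ^+ 2 + a ^+ 2 * (1 - x ^+ 2) = 1 - x ^+ 2.
  by rewrite -[in RHS]pell_ab; ring.
rewrite -(@ler_pM2r _ (1 - x ^+ 2)) ?subr_gt0 // mul1r.
have := sqr_ge0 (b - x * a); lra.
Qed.

Lemma cheb_horner_half_sum n z : z != 0 ->
  (cheb R n).[(z + z^-1) / 2] = (z ^+ n + z ^- n) / 2.
Proof.
move=> z_neq0; rewrite -exprVn; set w := z^-1.
have zw : z * w = 1 by rewrite mulfV.
suff [] : (cheb R n).[(z + w) / 2] = (z ^+ n + w ^+ n) / 2 /\
  (cheb R n.+1).[(z + w) / 2] = (z ^+ n.+1 + w ^+ n.+1) / 2 by [].
elim: n => [|n [IHn IHn1]].
  by rewrite /cheb /= hornerC hornerX; split=> //; field.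
split=> //; rewrite cheb_hornerSS IHn IHn1.
transitivity ((z ^+ n.+2 + w ^+ n.+2) / 2 + (z * w - 1) * (z ^+ n + w ^+ n) / 2).
  by rewrite !exprS; field.
by rewrite zw subrr mul0r mul0r addr0.
Qed.

End Chebyshev.

Section RhoStar.
Context {R : realType} {k : nat} {rho : R}.

Lemma size_p_star : (size (p_star k rho) <= k.+1)%N.
Proof.
rewrite (leq_trans (size_scale_leq _ _)) // (leq_trans (size_comp_poly_leq _ _)) //.
have size_lin : (size ((2 / rho) *: 'X - 1%:P : {poly R})%R <= 2)%N.
  rewrite (leq_trans (size_polyD _ _)) // geq_max size_polyN size_polyC.
  by rewrite (leq_trans (size_scale_leq _ _)) ?size_polyX //; case: (_ != _).
have size_T := @size_cheb R k.
by rewrite ltnS -[leqRHS]muln1 leq_mul //; lia.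
Qed.

Hypotheses (rho_gt0 : 0 < rho) (rho_lt1 : rho < 1).

Let s : R := Num.sqrt (1 - rho).
Let s_sqr : s ^+ 2 = 1 - rho. Proof. by rewrite sqr_sqrtr // subr_ge0 ltW. Qed.
Let s_gt0 : 0 < s. Proof. by rewrite sqrtr_gt0 subr_gt0. Qed.
Let s_lt1 : s < 1.
Proof. by rewrite -(expr_lt1 (n := 2)) ?ltW // s_sqr ltrBlDr ltrDl. Qed.

Lemma beta_gt0 : 0 < beta rho.
Proof. by rewrite /beta -/s divr_gt0 ?subr_gt0 ?addr_gt0. Qed.

Lemma beta_lt1 : beta rho < 1.
Proof. by rewrite /beta -/s ltr_pdivrMr ?addr_gt0 // mul1r; move: s_gt0; lra. Qed.

Lemma beta_half_sum : (beta rho + (beta rho)^-1) / 2 = (2 - rho) / rho.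
Proof.
have rhoE : rho = 1 - s ^+ 2 by rewrite s_sqr subKr.
rewrite /beta -/s [in RHS]rhoE; field.
by rewrite -rhoE !lt0r_neq0 ?subr_gt0 ?addr_gt0.
Qed.

Lemma cheb_horner_beta :
  (cheb R k).[(2 - rho) / rho] = (beta rho ^+ k + beta rho ^- k) / 2.
Proof. by rewrite -beta_half_sum cheb_horner_half_sum // lt0r_neq0 ?beta_gt0. Qed.

Lemma cheb_horner_beta_gt0 : 0 < (cheb R k).[(2 - rho) / rho].
Proof.
by rewrite cheb_horner_beta divr_gt0 // addr_gt0 ?invr_gt0 ?exprn_gt0 ?beta_gt0.
Qed.

Lemma rho_star_invE : rho_star k rho = ((cheb R k).[(2 - rho) / rho])^-1.
Proof.
rewrite cheb_horner_beta /rho_star mulnC exprM.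
have := exprn_gt0 k beta_gt0; set B := beta rho ^+ k => B_gt0.
by field; rewrite !lt0r_neq0 ?addr_gt0 ?mulr_gt0.
Qed.

Lemma rho_star_gt0 : 0 < rho_star k rho.
Proof. by rewrite rho_star_invE invr_gt0 cheb_horner_beta_gt0. Qed.

Lemma rho_star_lt1 : (0 < k)%N -> rho_star k rho < 1.
Proof.
move=> k_gt0; rewrite /rho_star mulnC exprM.
have B_gt0 := exprn_gt0 k beta_gt0.
have B_lt1 : beta rho ^+ k < 1.
  by rewrite exprn_ilt1 ?ltW ?beta_gt0 ?beta_lt1 // -lt0n.
set B := beta rho ^+ k in B_gt0 B_lt1 *.
rewrite ltr_pdivrMr ?addr_gt0 ?exprn_gt0 ?beta_gt0 // -subr_gt0.
have -> : 1 * (1 + B ^+ 2) - 2 * B = (1 - B) ^+ 2 by ring.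
by rewrite exprn_gt0 // subr_gt0.
Qed.

Lemma p_star_horner x :
  (p_star k rho).[x] = rho_star k rho * (cheb R k).[2 / rho * x - 1].
Proof.
rewrite /p_star hornerZ horner_comp hornerD hornerN hornerZ hornerX hornerC.
by rewrite rho_star_invE gtr0_norm ?cheb_horner_beta_gt0.
Qed.

Lemma p_star_admissible : admissible k (C_star k rho) (p_star k rho).
Proof.
split; first exact: size_p_star.
split=> //; rewrite p_star_horner rho_star_invE.
have -> : 2 / rho * 1 - 1 = (2 - rho) / rho by field; rewrite lt0r_neq0.
by rewrite mulVf // lt0r_neq0 ?cheb_horner_beta_gt0.
Qed.

Lemma supnorm_p_star : supnorm rho (p_star k rho) <= rho_star k rho.
Proof.
apply: (supnorm_le (ltW rho_gt0)) => x /andP[x_ge0 x_le_rho].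
have rho_star_ge0 := ltW rho_star_gt0.
rewrite p_star_horner normrM ger0_norm // ler_piMr // cheb_horner_le1 //.
have : 0 <= x / rho <= 1.
  by rewrite ler_pdivrMr // mul1r x_le_rho andbT divr_ge0 // ltW.
by rewrite ler_norml mulrAC -mulrA => /andP[]; lra.
Qed.

Lemma C_star_gt1 : (0 < k)%N -> 1 < C_star k rho.
Proof.
move=> k_gt0; have [size_p [p_1 norm_p]] := p_star_admissible.
have C_ge1 : 1 <= C_star k rho by rewrite -normr1 -{1}p_1 norm1_horner_le ?normr1.
rewrite lt_def C_ge1 andbT; apply/eqP => C_eq1.
have coef_ge0 : forall i, 0 <= (p_star k rho)`_i.
  by apply: coef_ge0_norm1_eq; rewrite p_1 -C_eq1.
have p_0 : (p_star k rho).[0] = rho_star k rho.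
  rewrite -[LHS]ger0_norm ?horner_coef0 // -horner_coef0 p_star_horner mulr0 add0r.
  rewrite normrM ger0_norm ?ltW ?rho_star_gt0 // cheb_horner_sqr1 ?sqrrN ?expr1n //.
  by rewrite normrX normrN normr1 expr1n mulr1.
have p_rho : (p_star k rho).[rho] = rho_star k rho.
  rewrite p_star_horner mulfVK ?lt0r_neq0 //.
  have -> : 2 - 1 = 1 :> R by ring.
  by rewrite cheb_horner_sqr1 ?expr1n ?mulr1.
have rho01 : 0 <= rho <= 1 by rewrite !ltW.
have := ler_horner_sub0 _ _ _ coef_ge0 size_p rho01.
by rewrite p_1 p_0 p_rho subrr leNgt pmulr_rgt0 ?exprn_gt0 // subr_gt0 rho_star_lt1.
Qed.

Lemma rho_tilde_C_star : rho_tilde k rho (C_star k rho) <= rho_star k rho.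
Proof.
have adm := rho_tilde_le k (ltW rho_gt0) (ltW rho_lt1) _ _ p_star_admissible.
exact: le_trans adm supnorm_p_star.
Qed.

End RhoStar.

Theorem lemma1 (R : realType) (k : nat) (rho : R) :
  (1 <= k)%N -> 0 < rho < 1 ->
  (forall (C1 C2 t : R), 1 <= C1 -> 1 <= C2 -> 0 <= t <= 1 ->
     rho_tilde k rho (t * C1 + (1 - t) * C2)
       <= t * rho_tilde k rho C1 + (1 - t) * rho_tilde k rho C2)
  /\
  (forall C : R, 1 <= C <= C_star k rho ->
     rho_tilde k rho C
       <= (C_star k rho - C) / (C_star k rho - 1) * rho ^+ k
          + (C - 1) / (C_star k rho - 1) * rho_star k rho).
Proof.
move=> k_gt0 /andP[rho_gt0 rho_lt1].
have rho_ge0 := ltW rho_gt0; have rho_le1 := ltW rho_lt1.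
have convex := rho_tilde_convex k rho_ge0 rho_le1.
have C_star_gt1k := C_star_gt1 rho_gt0 rho_lt1 k_gt0.
have C_star_ge1 := ltW C_star_gt1k.
split=> // C; apply: convex_le_chord C_star_gt1k _ _.
- by move=> t; apply: convex.
- exact (rho_tilde1 k rho_ge0 rho_le1).
- exact: rho_tilde_C_star.
Qed.
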